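(* Let $n\ge1$ and $\bm{N}=(N_0,\ldots,N_{n-1},-\sum_{i=0}^{n-1}N_i)$ with integers $N_i>0$. Let $s_k=\sum_{j=0}^kN_j$ (with $s_{-1}=0$) and for $1\le k\le n$ let \[ c_k=\frac{s_{n-k}}{k}-\frac{s_{n-k-1}}{k+1}=\frac{N_{n-k}}{k+1}+\frac{s_{n-k}}{k(k+1)}. \] Then the uniform average of the vertices of $\mathcal{F}_n(\bm{N})$ is the flow $\bm{f}$ with $f_{ij}=c_{n-i}$ for all $0\le i<j\le n$. (Equivalently, in the $n\times n$ matrix form the row $i$ entries $a_{ij}$ with $i+j\le n-1$ equal $c_{n-i}$, and the entry $a_{k',n-k'}$ for $1\le k'\le n-1$ in the row with label $k=n-k'$ equals $b_k=\frac{k}{k+1}s_{n-k-1}$.)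
   Context: $\mathcal{F}_n(\bm{N})$ is the polytope of $\bm{f}=(f_{ij})_{0\le i<j\le n}\in\mathbb{R}_{\ge0}^{\binom{n+1}{2}}$ with $\sum_{j>i} f_{ij}-\sum_{k<i} f_{ki}=N_i$ for every $i\in\{0,\ldots,n\}$. The uniform average of vertices is the arithmetic mean of its (finitely many) vertices. The matrix form of $\bm f$ is $(a_{ij})_{0\le i,j\le n-1}$ with $a_{ij}=f_{i,n-j}$ for $i+j\le n-1$, $a_{i,n-i}=\sum_{k<i}(N_k-f_{k,i})$ for $1\le i\le n-1$, zero otherwise. *)

From HB Require Import structures.
From mathcomp Require Import all_boot all_order all_algebra.
From mathcomp Require Import reals.
Unset Printing Implicit Defensive.
Import Order.TTheory GRing.Theory Num.Theory.
Local Open Scope ring_scope.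

(* A flow f = (f_ij)_{0<=i<j<=n} is encoded as an (n+1)x(n+1) matrix whose
   entries outside the strict upper triangle are 0 (an isometric embedding of
   R^{binom(n+1,2)}). *)

Definition netN {R : realType} (n : nat) (N : nat -> nat) (i : 'I_n.+1) : R :=
  if (i < n)%N then (N i)%:R else - (\sum_(j < n) (N j)%:R).

Definition flow_polytope {R : realType} (n : nat) (N : nat -> nat)
  (f : 'M[R]_n.+1) : Prop :=
  (forall i j : 'I_n.+1, ~~ (i < j)%N -> f i j = 0) /\
  (forall i j : 'I_n.+1, 0 <= f i j) /\
  (forall i : 'I_n.+1,
     \sum_(j < n.+1 | (i < j)%N) f i j - \sum_(k < n.+1 | (k < i)%N) f k i
     = netN n N i).

Definition is_vertex {R : realType} {m : nat} (P : 'M[R]_m -> Prop)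
  (x : 'M[R]_m) : Prop :=
  P x /\ forall (y z : 'M[R]_m) (t : R), P y -> P z -> 0 < t < 1 ->
    x = t *: y + (1 - t) *: z -> y = z.

Definition uniform_average {R : realType} {m : nat} (V : seq 'M[R]_m) : 'M[R]_m :=
  (size V)%:R^-1 *: \sum_(v <- V) v.

(* s_{k-1} = sum_{j<k} N_j  (so S 0 = s_{-1} = 0) *)
Definition Ssum {R : realType} (N : nat -> nat) (k : nat) : R :=
  \sum_(j < k) (N j)%:R.

Definition cc {R : realType} (n : nat) (N : nat -> nat) (k : nat) : R :=
  Ssum N (n - k).+1 / k%:R - Ssum N (n - k) / k.+1%:R.

Definition avg_flow {R : realType} (n : nat) (N : nat -> nat) : 'M[R]_n.+1 :=
  \matrix_(i < n.+1, j < n.+1) (if (i < j)%N then cc n N (n - i) else 0).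

From HB Require Import structures.
From mathcomp Require Import all_boot all_order all_algebra.
From mathcomp Require Import perm reals ring lra zify.
Import Order.TTheory GRing.Theory Num.Theory.
Local Open Scope ring_scope.

(* With all N_i > 0, the vertices of F_n(N) are exactly the "tree flows": choose
   for every i < n one successor s(i) > i and send along the single edge
   i -> s(i) all the flow arriving at i plus N_i.  Indeed, the support of such a
   flow determines it, and conversely two positive edges out of one node of a
   vertex, each continued along positive edges to the sink n, would carry a
   circulation along which the vertex could be perturbed both ways.
   Averaging over all successor maps s: the flow out of i only depends on s
   below i, so exchanging two targets j, j' > i of i is a bijection showing that
   every edge i -> j carries the same average flow g_i.  Conservation at i then
   reads (n - i) g_i = N_i + sum_{k<i} g_k, whose solution is g_i = c_{n-i}. *)

Lemma convex_eq0 {R : realDomainType} {t u v : R} :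
  0 < t < 1 -> 0 <= u -> 0 <= v -> t * u + (1 - t) * v = 0 -> u = 0 /\ v = 0.
Proof.
move=> /andP[t_gt0 t_lt1] u_ge0 v_ge0 /eqP.
rewrite paddr_eq0 ?mulr_ge0 ?subr_ge0 ?(ltW t_gt0) ?(ltW t_lt1) //.
by rewrite !mulf_eq0 subr_eq0 (gt_eqF t_gt0) (gt_eqF t_lt1) => /andP[/eqP -> /eqP ->].
Qed.

Lemma exists_scale_below {F : realFieldType} {m p : nat} (x d : 'M[F]_(m, p)) :
  (forall a b, 0 <= x a b) -> (forall a b, d a b != 0 -> 0 < x a b) ->
  exists2 e : F, 0 < e & forall a b, e * `|d a b| <= x a b.
Proof.
move=> x_ge0 supp_d; pose M := \sum_(ab : 'I_m * 'I_p) `|d ab.1 ab.2| / x ab.1 ab.2.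
have M_ge0 : 0 <= M by apply: sumr_ge0 => ab _; rewrite divr_ge0.
exists (1 + M)^-1 => [|a b]; first by rewrite invr_gt0; lra.
have [-> | /supp_d x_gt0] := eqVneq (d a b) 0; first by rewrite normr0 mulr0.
have : `|d a b| / x a b <= M.
  by rewrite /M (bigD1 (a, b)) //= lerDl sumr_ge0 // => ab _; rewrite divr_ge0.
by rewrite ler_pdivrMr // => le_dM; rewrite mulrC ler_pdivrMr; nra.
Qed.

Section FlowPolytope.
Variables (R : realType) (n : nat) (N : nat -> nat).

Local Notation I := 'I_n.+1.
Local Notation MX := 'M[R]_n.+1.
Local Notation polytope := (flow_polytope n N).
Implicit Types (d f x : MX) (s : {ffun I -> I}) (a b i j k v : I).

Definition netf i f : R :=
  \sum_(j < n.+1 | (i < j)%N) f i j - \sum_(k < n.+1 | (k < i)%N) f k i.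

Fact netf_is_linear i : linear_for *%R (netf i).
Proof.
move=> c f g; rewrite /netf.
under eq_bigr do rewrite !mxE.
under [X in _ - X]eq_bigr do rewrite !mxE.
by rewrite !big_split /= -!mulr_sumr; ring.
Qed.

HB.instance Definition _ i :=
  GRing.isLinear.Build R MX R *%R (netf i) (netf_is_linear i).

Lemma sum_netf f : \sum_i netf i f = 0.
Proof. by rewrite /netf sumrB (exchange_big_dep xpredT) //= subrr. Qed.

Lemma netf_delta a b v : (a < b)%N ->
  netf v (delta_mx a b) = (v == a)%:R - (v == b)%:R.
Proof.
move=> lt_ab; rewrite /netf.
under eq_bigr do rewrite mxE.
under [X in _ - X]eq_bigr do rewrite mxE.
have sum_at (P : pred I) c : \sum_(j | P j) ((j == c)%:R : R) = (P c)%:R.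
  rewrite big_mkcond (bigD1 c) //= big1 ?addr0; first by case: (P c); rewrite /= ?eqxx.
  by move=> j /negbTE ->; case: (P j).
have [-> | _] := eqVneq v a.
  have neq_ab : (a == b) = false by apply/eqP => eq_ab; rewrite eq_ab ltnn in lt_ab.
  under eq_bigr do rewrite andTb.
  by rewrite sum_at lt_ab neq_ab big1 ?subr0 // => k _; rewrite andbF.
rewrite /= big1 ?sub0r //; have [-> | _] := eqVneq v b.
  by under eq_bigr do rewrite andbT; rewrite sum_at lt_ab.
by rewrite big1 ?oppr0 // => k _; rewrite andbF.
Qed.

Lemma netf_netN f : (forall i, (i < n)%N -> netf i f = (N i)%:R) ->
  forall i, netf i f = netN n N i.
Proof.
move=> supply i; rewrite /netN; case: ifP => [/supply // | not_lt_in].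
have -> : i = ord_max by apply/val_inj => /=; move: (ltn_ord i); lia.
move/eqP: (sum_netf f); rewrite big_ord_recr /= addrC addr_eq0 => /eqP ->.
by congr (- _); apply: eq_bigr => j _; rewrite supply //=; exact: ltn_ord.
Qed.

Lemma polytope_pos_lt {x a b} : polytope x -> 0 < x a b -> (a < b)%N.
Proof. by case=> upper _ pos_ab; apply: contraTT pos_ab => /upper ->; rewrite ltxx. Qed.

Lemma circulation_not_vertex {x} d a b : polytope x ->
  (forall v, netf v d = 0) -> (forall a b, d a b != 0 -> 0 < x a b) ->
  d a b != 0 -> ~ is_vertex polytope x.
Proof.
move=> Px circ_d supp_d d_ab [_ extreme_x]; have [upper_x [x_ge0 net_x]] := Px.
have [e e_gt0 le_ex] := exists_scale_below x d x_ge0 supp_d.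
have P_shift c : `|c| = e -> polytope (x + c *: d).
  move=> norm_c; split; [|split] => [i j not_lt_ij | i j | i].
  - rewrite !mxE upper_x //.
    have [-> | /supp_d /(polytope_pos_lt Px)] := eqVneq (d i j) 0.
      by rewrite mulr0 addr0.
    by rewrite (negbTE not_lt_ij).
  - have := le_ex i j; have := ler_norm (- (c * d i j)).
    by rewrite !mxE normrN normrM norm_c; lra.
  - by rewrite -[LHS]/(netf i _) linearD linearZ /= circ_d mulr0 addr0; apply: net_x.
have half : 0 < (2^-1 : R) < 1 by apply/andP; split; lra.
have mid : x = 2^-1 *: (x + e *: d) + (1 - 2^-1) *: (x + - e *: d).
  by apply/matrixP => i j; rewrite !mxE; field.
have norm_e : `|e| = e := gtr0_norm e_gt0.
have norm_Ne : `|- e| = e by rewrite normrN.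
have := extreme_x _ _ _ (P_shift e norm_e) (P_shift (- e) norm_Ne) half mid.
move=> /matrixP /(_ a b) /eqP; rewrite !mxE (inj_eq (addrI _)) mulNr -addr_eq0.
by rewrite -mulr2n mulrn_eq0 mulf_eq0 (gt_eqF e_gt0) (negbTE d_ab).
Qed.

Definition forward s : bool :=
  [forall i : I, if (i < n)%N then (i < s i)%N else s i == i].

Lemma forward_lt {s i} : forward s -> (i < n)%N -> (i < s i)%N.
Proof. by move=> /forallP /(_ i); case: ifP. Qed.

Lemma forward_last {s i} : forward s -> ~~ (i < n)%N -> s i = i.
Proof. by move=> /forallP /(_ i); case: ifP => // _ /eqP. Qed.

Lemma card_forward_gt0 : (0 < #|forward|)%N.
Proof.
apply/card_gt0P; exists [ffun=> ord_max]; apply/forallP => i; rewrite !ffunE.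
by case: ifP => // not_lt_in; apply/eqP/val_inj => /=; have := ltn_ord i; lia.
Qed.

(* The recursion only descends to smaller indices, so fuel [i.+1] suffices at [i]. *)
Fixpoint outflow_fuel s (fuel : nat) i : R :=
  if fuel is m.+1 then
    (N i)%:R + \sum_(k < n.+1 | (k < i)%N && (s k == i)) outflow_fuel s m k
  else 0.

Definition outflow s i := outflow_fuel s i.+1 i.

Lemma outflow_fuelE s m i : (i < m)%N -> outflow_fuel s m i = outflow s i.
Proof.
suff fuel_irr m' : (i < m)%N -> (i < m')%N ->
    outflow_fuel s m i = outflow_fuel s m' i.
  by move=> lt_im; apply: fuel_irr.
elim: m m' i => [|m IH] [|m'] i //= lt_im lt_im'.
by congr (_ + _); apply: eq_bigr => k /andP[lt_ki _]; apply: IH; lia.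
Qed.

Lemma outflowE s i :
  outflow s i = (N i)%:R + \sum_(k < n.+1 | (k < i)%N && (s k == i)) outflow s k.
Proof.
rewrite {1}/outflow /=; congr (_ + _).
by apply: eq_bigr => k /andP[lt_ki _]; apply: outflow_fuelE.
Qed.

Lemma outflow_ge s i : (N i)%:R <= outflow s i.
Proof.
have fuel_ge0 m j : 0 <= outflow_fuel s m j.
  by elim: m j => [|m IH] j //=; rewrite addr_ge0 ?sumr_ge0.
by rewrite outflowE lerDl sumr_ge0 // => k _; apply: fuel_ge0.
Qed.

Lemma outflow_ge0 s i : 0 <= outflow s i.
Proof. exact: le_trans (ler0n _ _) (outflow_ge s i). Qed.

Lemma eq_outflow s s' i : (forall k, (k < i)%N -> s k = s' k) ->
  outflow s i = outflow s' i.
Proof.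
move=> eq_ss'; rewrite /outflow.
suff eq_fuel m j : (j <= i)%N -> outflow_fuel s m j = outflow_fuel s' m j.
  exact: eq_fuel.
elim: m j => [|m IH] j //= le_ji; congr (_ + _).
apply: eq_big => [k | k /andP[lt_kj _]]; last by apply: IH; lia.
by case: ltnP => //= lt_kj; rewrite eq_ss' //; lia.
Qed.

Definition tree_flow s : MX :=
  \matrix_(i, j) (if (i < n)%N && (s i == j) then outflow s i else 0).

Definition tree_supported s f : Prop :=
  forall a b, f a b != 0 -> (a < n)%N && (s a == b).

Lemma tree_flow_supported s : tree_supported s (tree_flow s).
Proof. by move=> a b; rewrite mxE; case: ifP => //; rewrite eqxx. Qed.

Lemma netf_tree_supported {s f i} : forward s -> tree_supported s f -> (i < n)%N ->
  netf i f = f i (s i) - \sum_(k < n.+1 | (k < i)%N && (s k == i)) f k i.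
Proof.
move=> fw_s supp_f lt_in; rewrite /netf (bigD1 (s i)) ?(forward_lt fw_s) //=.
rewrite big1 ?addr0 => [|j /andP[_ ne_j]]; last first.
  by apply/eqP; apply: contraNT ne_j => /supp_f /andP[_ /eqP ->].
congr (_ - _); rewrite big_mkcondr /=; apply: eq_bigr => k _.
by have [-> | /supp_f /andP[_ ->]] := eqVneq (f k i) 0; first by case: ifP.
Qed.

Lemma tree_flow_polytope {s} : forward s -> polytope (tree_flow s).
Proof.
move=> fw_s; split; [|split].
- move=> i j; rewrite mxE; case: ifP => // /andP[lt_in /eqP <-].
  by rewrite (forward_lt fw_s).
- by move=> i j; rewrite mxE; case: ifP => // _; apply: outflow_ge0.
apply: netf_netN => i lt_in.
rewrite (netf_tree_supported fw_s (tree_flow_supported s)) // mxE lt_in eqxx /=.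
rewrite [outflow s i]outflowE [X in _ - X](eq_bigr (outflow s)) ?addrK //.
move=> k /andP[lt_ki /eqP <-].
by rewrite mxE eqxx andbT; have -> : (k < n)%N by lia.
Qed.

Lemma tree_flow_unique {s f} : forward s -> polytope f -> tree_supported s f ->
  f = tree_flow s.
Proof.
move=> fw_s [_ [_ net_f]] supp_f; apply/matrixP => i.
have [m] := ubnP i; elim: m i => // m IH i lt_im j; rewrite mxE.
case: ifP => [/andP[lt_in /eqP <-] | not_edge]; last first.
  by apply/eqP; apply: contraFT not_edge => /supp_f.
have := net_f i; rewrite /netN lt_in -/(netf i f).
rewrite (netf_tree_supported fw_s supp_f lt_in) outflowE => <-.
rewrite [X in _ + X](eq_bigr (fun k => f k i)) ?subrK // => k /andP[lt_ki /eqP <-].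
by rewrite IH; [rewrite mxE eqxx andbT; have -> : (k < n)%N by lia | lia].
Qed.

Lemma tree_flow_vertex {s} : forward s -> is_vertex polytope (tree_flow s).
Proof.
move=> fw_s; split; first exact: tree_flow_polytope.
move=> y z t Py Pz t01 /matrixP tree_yz.
have supp_yz a b : ~~ ((a < n)%N && (s a == b)) -> y a b = 0 /\ z a b = 0.
  have [_ [y_ge0 _]] := Py; have [_ [z_ge0 _]] := Pz.
  move=> not_edge; apply: (convex_eq0 t01 (y_ge0 a b) (z_ge0 a b)).
  by have := tree_yz a b; rewrite !mxE (negbTE not_edge) => <-.
rewrite (tree_flow_unique fw_s Py) 1?(tree_flow_unique fw_s Pz) // => a b.
  by apply: contraR => /supp_yz [_ ->]; rewrite eqxx.
by apply: contraR => /supp_yz [-> _]; rewrite eqxx.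
Qed.

Definition swap_target i j j' s : {ffun I -> I} :=
  [ffun k => if k == i then tperm j j' (s k) else s k].

Lemma swap_targetK i j j' : involutive (swap_target i j j').
Proof.
by move=> s; apply/ffunP => k; rewrite !ffunE; case: eqP => // ->; rewrite tpermK.
Qed.

Lemma forward_swap_target i j j' s : (i < n)%N -> (i < j)%N -> (i < j')%N ->
  forward (swap_target i j j' s) = forward s.
Proof.
move=> lt_in lt_ij lt_ij'.
suff fw_swap s' : forward s' -> forward (swap_target i j j' s').
  by apply/idP/idP => [/fw_swap | /fw_swap //]; rewrite swap_targetK.
move=> /forallP fw_s'; apply/forallP => k; rewrite !ffunE.
case: eqP => [-> | _]; last exact: fw_s'.
by have := fw_s' i; rewrite lt_in; case: tpermP => // ->.
Qed.

Lemma outflow_swap_target i j j' s : outflow (swap_target i j j' s) i = outflow s i.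
Proof.
apply: eq_outflow => k lt_ki; rewrite ffunE.
by case: eqP => // eq_ki; rewrite eq_ki ltnn in lt_ki.
Qed.

Definition edge_total i j : R := \sum_(s | forward s) tree_flow s i j.

Lemma edge_totalE i j : (i < n)%N ->
  edge_total i j = \sum_(s | forward s && (s i == j)) outflow s i.
Proof.
by move=> lt_in; rewrite big_mkcondr; apply: eq_bigr => s _; rewrite mxE lt_in.
Qed.

Lemma edge_total_eq i j j' : (i < n)%N -> (i < j)%N -> (i < j')%N ->
  edge_total i j = edge_total i j'.
Proof.
move=> lt_in lt_ij lt_ij'; rewrite !edge_totalE //.
rewrite (reindex_inj (can_inj (swap_targetK i j' j))); apply: eq_big => [s | s _].
  rewrite forward_swap_target // ffunE eqxx -[X in _ == X](tpermL j' j).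
  by rewrite (inj_eq perm_inj).
by rewrite outflow_swap_target.
Qed.

Lemma sum_outflow_out i : (i < n)%N ->
  \sum_(s | forward s) outflow s i = (n - i)%:R * edge_total i ord_max.
Proof.
move=> lt_in; transitivity (\sum_(j : I | (i < j)%N) edge_total i j).
  rewrite exchange_big /=; apply: eq_bigr => s fw_s.
  rewrite (bigD1 (s i)) ?(forward_lt fw_s) //= mxE lt_in eqxx big1 ?addr0 //.
  by move=> j /andP[_ ne_j]; rewrite mxE lt_in eq_sym (negbTE ne_j).
rewrite (eq_bigr (fun=> edge_total i ord_max)) => [|j lt_ij]; last first.
  by apply: edge_total_eq => //=; lia.
transitivity (\sum_(i.+1 <= j < n.+1) edge_total i ord_max).
  by rewrite big_geq_mkord; apply: eq_bigl.
by rewrite sumr_const_nat subSS mulr_natl.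
Qed.

Lemma sum_outflow_in i : \sum_(s | forward s) outflow s i =
  (N i)%:R * #|forward|%:R + \sum_(k < n.+1 | (k < i)%N) edge_total k i.
Proof.
under eq_bigr do rewrite outflowE big_mkcondr.
rewrite big_split /= sumr_const mulr_natr; congr (_ + _).
rewrite exchange_big /=; apply: eq_bigr => k lt_ki.
by rewrite edge_totalE -?big_mkcondr //; have := ltn_ord i; lia.
Qed.

Lemma edge_total_rec i : (i < n)%N ->
  (n - i)%:R * edge_total i ord_max =
  (N i)%:R * #|forward|%:R + \sum_(k < n.+1 | (k < i)%N) edge_total k ord_max.
Proof.
move=> lt_in; rewrite -sum_outflow_out // sum_outflow_in; congr (_ + _).
by apply: eq_bigr => k lt_ki; apply: edge_total_eq => //=; lia.
Qed.

Lemma sum_edge_total_prefix m : (m <= n)%N ->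
  \sum_(k < n.+1 | (k < m)%N) edge_total k ord_max =
  #|forward|%:R * Ssum N m / (n - m).+1%:R.
Proof.
elim: m => [_ | m IH lt_mn]; first by rewrite big_pred0 // /Ssum big_ord0 mulr0 mul0r.
pose m' : I := Ordinal (leqW lt_mn).
rewrite (bigD1 m') //= (eq_bigl (fun k : I => (k < m)%N)) => [|k]; last first.
  by rewrite ltnS ltn_neqAle -val_eqE /= andbC.
have rec := edge_total_rec m' lt_mn; rewrite IH ?(ltnW lt_mn) // in rec *.
have -> : (n - m.+1).+1 = (n - m)%N by lia.
have nm_neq0 : (n - m)%:R != 0 :> R by rewrite pnatr_eq0 subn_eq0 -ltnNge.
rewrite -[edge_total m' ord_max](mulKf nm_neq0) rec /Ssum big_ord_recr /= -/(Ssum N m).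
by rewrite -natr1; field; rewrite nm_neq0 natr1 pnatr_eq0.
Qed.

Lemma edge_total_last i : (i < n)%N ->
  edge_total i ord_max = #|forward|%:R * cc n N (n - i).
Proof.
move=> lt_in; have := edge_total_rec i lt_in.
rewrite sum_edge_total_prefix ?(ltnW lt_in) // /cc subKn ?(ltnW lt_in) //.
rewrite /Ssum big_ord_recr /= -/(Ssum N i) => rec.
have ni_neq0 : (n - i)%:R != 0 :> R by rewrite pnatr_eq0 subn_eq0 -ltnNge.
rewrite -[edge_total i ord_max](mulKf ni_neq0) rec.
by rewrite -natr1; field; rewrite ni_neq0 natr1 pnatr_eq0.
Qed.

Lemma sum_tree_flow : \sum_(s | forward s) tree_flow s = #|forward|%:R *: avg_flow n N.
Proof.
apply/matrixP => i j; rewrite summxE !mxE.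
case: ifP => [lt_ij | not_lt_ij]; last first.
  by rewrite mulr0 big1 // => s /tree_flow_polytope [upper _]; rewrite upper ?not_lt_ij.
have lt_in : (i < n)%N by have := ltn_ord j; lia.
rewrite -/(edge_total i j) (edge_total_eq i j ord_max) ?edge_total_last //=; lia.
Qed.

Hypothesis N_gt0 : forall i : nat, (i < n)%N -> (0 < N i)%N.

Lemma outflow_gt0 s i : (i < n)%N -> 0 < outflow s i.
Proof. by move=> lt_in; apply: lt_le_trans (outflow_ge s i); rewrite ltr0n N_gt0. Qed.

Lemma tree_flow_inj : {in forward &, injective tree_flow}.
Proof.
move=> s s' fw_s fw_s' /matrixP eq_flow; apply/ffunP => i.
have [lt_in | le_ni] := ltnP i n; last by rewrite !forward_last // -leqNgt.
have := eq_flow i (s i); rewrite !mxE lt_in eqxx /=.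
by case: eqP => [-> // | _ /eqP]; rewrite gt_eqF ?outflow_gt0.
Qed.

Definition next x j : I := odflt ord_max [pick j' | 0 < x j j'].

Lemma next_pos {x j} : polytope x -> (j < n)%N -> 0 < x j (next x j).
Proof.
move=> [_ [x_ge0 net_x]] lt_jn; rewrite /next; case: pickP => [// | no_out].
have := net_x j; rewrite /netN lt_jn big1; last first.
  by move=> j' _; apply/eqP; rewrite eq_le x_ge0 andbT leNgt no_out.
have : 0 <= \sum_(k < n.+1 | (k < j)%N) x k j by apply: sumr_ge0.
have : 0 < (N j)%:R :> R by rewrite ltr0n N_gt0.
lra.
Qed.

Lemma next_gt {x j} : polytope x -> (j < n)%N -> (j < next x j)%N.
Proof. by move=> Px lt_jn; apply: (polytope_pos_lt Px); apply: next_pos. Qed.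

Fixpoint path_to_sink x (fuel : nat) j : MX :=
  if fuel is m.+1 then
    if (j < n)%N then delta_mx j (next x j) + path_to_sink x m (next x j) else 0
  else 0.

Lemma path_to_sink_supp {x m j a b} : polytope x ->
  path_to_sink x m j a b != 0 -> 0 < x a b /\ (j <= a)%N.
Proof.
move=> Px; elim: m j => [|m IH] j /=; first by rewrite mxE eqxx.
case: ifP => [lt_jn | _]; last by rewrite mxE eqxx.
rewrite !mxE; case: andP => [[/eqP -> /eqP ->] _ | _]; first by rewrite next_pos.
rewrite add0r => /IH [x_pos le_next]; split => //.
by have := next_gt Px lt_jn; lia.
Qed.

Lemma netf_path_to_sink {x} m j v : polytope x -> (n - j <= m)%N ->
  netf v (path_to_sink x m j) = (v == j)%:R - (v == ord_max)%:R.
Proof.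
move=> Px; have sink k : ~~ (k < n)%N -> k = ord_max.
  by move=> le_nk; apply/val_inj => /=; move: (ltn_ord k); lia.
elim: m j => [|m IH] j le_m /=.
  by rewrite (linear0 (netf v)) (sink j) ?subrr //; lia.
case: ifP => [lt_jn | /negbT/sink ->]; last by rewrite (linear0 (netf v)) subrr.
rewrite linearD /= netf_delta ?(next_gt Px) // IH; last by have := next_gt Px lt_jn; lia.
by rewrite addrA subrK.
Qed.

Lemma vertex_out_edge_uniq {x i j1 j2} : is_vertex polytope x ->
  0 < x i j1 -> 0 < x i j2 -> j1 = j2.
Proof.
move=> vx pos1 pos2; have [Px _] := vx; apply/eqP; apply: contraT => ne12.
have path0 m j a b : ~~ (0 < x a b) -> path_to_sink x m j a b = 0.
  by move=> not_pos; apply/eqP; apply: contraNT not_pos => /(path_to_sink_supp Px) [].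
pose d := path_to_sink x n j1 + delta_mx i j1 - delta_mx i j2 - path_to_sink x n j2.
have lt1 := polytope_pos_lt Px pos1; have lt2 := polytope_pos_lt Px pos2.
exfalso; apply: (circulation_not_vertex d i j1 Px _ _ _ vx).
- move=> v; rewrite !linearB linearD /= !(netf_path_to_sink _ _ _ Px) ?leq_subr //.
  by rewrite !netf_delta //; ring.
- move=> a b; apply: contraR => not_pos; rewrite !mxE !path0 //.
  case: andP => [[/eqP ea /eqP eb] | _]; first by rewrite ea eb pos1 in not_pos.
  case: andP => [[/eqP ea /eqP eb] | _]; first by rewrite ea eb pos2 in not_pos.
  by rewrite !subr0 add0r.
have row_i0 j : (i < j)%N -> path_to_sink x n j i j1 = 0.
  move=> lt_ij; apply/eqP; apply: contraTT lt_ij.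
  by case/(path_to_sink_supp Px) => _; rewrite -leqNgt.
by rewrite !mxE !row_i0 // !eqxx /= (negbTE ne12) /= add0r !subr0 oner_neq0.
Qed.

Lemma vertexP x : is_vertex polytope x <-> exists2 s, forward s & x = tree_flow s.
Proof.
split=> [vx | [s fw_s ->]]; last exact: tree_flow_vertex.
have [Px _] := vx; have [_ [x_ge0 _]] := Px.
pose s := [ffun i : I => if (i < n)%N then next x i else i].
have fw_s : forward s.
  apply/forallP => i; rewrite !ffunE; case: ifP => [lt_in | ->] //.
  by rewrite lt_in; exact: next_gt.
exists s => //; apply: tree_flow_unique => // a b x_ab.
have pos_ab : 0 < x a b by rewrite lt_def x_ab x_ge0.
have lt_an : (a < n)%N by have := polytope_pos_lt Px pos_ab; have := ltn_ord b; lia.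
rewrite lt_an ffunE lt_an; apply/eqP.
exact: vertex_out_edge_uniq vx (next_pos Px lt_an) pos_ab.
Qed.

Definition vertices : seq MX := [seq tree_flow s | s in forward].

Lemma vertices_uniq : uniq vertices.
Proof.
rewrite map_inj_in_uniq ?enum_uniq // => s s'.
by rewrite !mem_enum; apply: tree_flow_inj.
Qed.

Lemma mem_vertices x : x \in vertices <-> is_vertex polytope x.
Proof.
rewrite vertexP; split => [/imageP [s fw_s ->] | [s fw_s ->]]; first by exists s.
exact: image_f.
Qed.

Lemma uniform_average_vertices V : uniq V ->
  (forall x, x \in V <-> is_vertex polytope x) -> uniform_average V = avg_flow n N.
Proof.
move=> uniq_V V_vertex; have eq_V : perm_eq V vertices.
  apply: uniq_perm => [//|| x]; first exact: vertices_uniq.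
  by apply/idP/idP => [/V_vertex/mem_vertices | /mem_vertices/V_vertex].
rewrite /uniform_average (perm_size eq_V) (perm_big _ eq_V) big_image size_image.
rewrite (eq_bigl forward) // sum_tree_flow scalerA mulVf ?scale1r //.
by rewrite pnatr_eq0 -lt0n card_forward_gt0.
Qed.

End FlowPolytope.

Theorem proposition4p1 (R : realType) (n : nat) (N : nat -> nat) :
  (0 < n)%N -> (forall i, (i < n)%N -> (0 < N i)%N) ->
  (exists V : seq 'M[R]_n.+1,
      uniq V /\ forall x, x \in V <-> is_vertex (flow_polytope n N) x) /\
  (forall V : seq 'M[R]_n.+1,
      uniq V -> (forall x, x \in V <-> is_vertex (flow_polytope n N) x) ->
      uniform_average V = avg_flow n N).
Proof.
move=> _ N_gt0; split=> [|V uniq_V V_vertex]; last exact: uniform_average_vertices.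
by exists (vertices R n N); split=> [|x]; [apply: vertices_uniq | apply: mem_vertices].
Qed.
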